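(* If $G$ is a tightly closed graph on $[n]$, then $NC_G$ is graded.
   Context: Graphs are finite simple graphs with vertex set $[n]$; edges are written $ij$ with $i<j$. Two edges $a_1a_2$ and $b_1b_2$ cross if $a_1<b_1<a_2<b_2$ or $b_1<a_1<b_2<a_2$. A bond of $G$ is a spanning subgraph (identified with its edge set) each of whose connected components is an induced subgraph of $G$; it is noncrossing if there are no two distinct components with vertex sets $B,B'$ and $a,c\in B$, $b,d\in B'$, $a<b<c<d$. $NC_G$ is the poset of noncrossing bonds ordered by inclusion of edge sets. Two crossing edges $e,f$ are crossing closed if among all induced connected subgraphs of $G$ containing $e$ and $f$ there is a unique minimal one under containment, denoted $J(e,f)$; $G$ is crossing closed if all pairs of crossing edges are. $G$ is tightly closed if it is crossing closed and for all crossing edges $e,f$, $J(e,f)$ is a subgraph of $K_4$. *)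

From mathcomp Require Import all_boot all_order.
Set Implicit Arguments. Unset Strict Implicit. Unset Printing Implicit Defensive.

(* Vertices [n] are represented by 'I_n = {0,...,n-1} (order-preserving shift).
   A graph / edge set is a set of pairs (i,j) with i < j. *)
Definition edgeset n := {set 'I_n * 'I_n}.

Definition is_graph n (G : edgeset n) : Prop := forall e, e \in G -> e.1 < e.2.

Definition adj n (S : edgeset n) : rel 'I_n :=
  fun u v => ((u, v) \in S) || ((v, u) \in S).

Definition same_comp n (S : edgeset n) (u v : 'I_n) : bool := connect (adj S) u v.

(* S is a bond of G: S is a set of edges of G and each connected component
   of the spanning subgraph ([n], S) is an induced subgraph of G. *)
Definition bond n (G S : edgeset n) : bool :=
  (S \subset G) && [forall e in G, same_comp S e.1 e.2 ==> (e \in S)].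

Definition noncrossing_bond n (G S : edgeset n) : bool :=
  bond G S &&
  [forall a : 'I_n, forall b : 'I_n, forall c : 'I_n, forall d : 'I_n,
     ((a < b) && (b < c) && (c < d)) ==>
     ~~ [&& same_comp S a c, same_comp S b d & ~~ same_comp S a b]].

Definition NC_chain n (G : edgeset n) (C : {set edgeset n}) : bool :=
  [forall S in C, noncrossing_bond G S] &&
  [forall S in C, forall T in C, (S \subset T) || (T \subset S)].

Definition NC_maximal_chain n (G : edgeset n) (C : {set edgeset n}) : bool :=
  NC_chain G C && [forall D : {set edgeset n}, (NC_chain G D && (C \subset D)) ==> (D == C)].

(* Graded: every maximal chain has the same length (length = #|C| - 1). *)
Definition NC_graded n (G : edgeset n) : Prop :=
  forall C1 C2, NC_maximal_chain G C1 -> NC_maximal_chain G C2 -> #|C1| = #|C2|.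

Definition cross n (e f : 'I_n * 'I_n) : bool :=
  [&& e.1 < f.1, f.1 < e.2 & e.2 < f.2] || [&& f.1 < e.1, e.1 < f.2 & f.2 < e.2].

Definition induced_connected n (G : edgeset n) (W : {set 'I_n}) : bool :=
  [forall u in W, forall v in W,
     connect (fun x y => [&& x \in W, y \in W & adj G x y]) u v].

Definition contains_ef n (G : edgeset n) (e f : 'I_n * 'I_n) : pred {set 'I_n} :=
  fun W => [&& induced_connected G W, e.1 \in W, e.2 \in W, f.1 \in W & f.2 \in W].

(* e, f crossing closed: unique minimal such induced connected subgraph
   (its vertex set determines it, as it is induced) *)
Definition crossing_closed_pair n (G : edgeset n) (e f : 'I_n * 'I_n) : Prop :=
  exists! W, minset (contains_ef G e f) W.

Definition crossing_closed n (G : edgeset n) : Prop :=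
  forall e f, e \in G -> f \in G -> cross e f -> crossing_closed_pair G e f.

(* tightly closed: crossing closed and each J(e,f) is a subgraph of K_4,
   i.e. has at most 4 vertices *)
Definition tightly_closed n (G : edgeset n) : Prop :=
  crossing_closed G /\
  forall e f, e \in G -> f \in G -> cross e f ->
    forall W, minset (contains_ef G e f) W -> #|W| <= 4.

(* Rank a bond by its number of components. The rank drops strictly along strict
   inclusions of bonds, and every maximal chain of NC_G contains the empty bond (rank n)
   and G itself, which is noncrossing because G is tightly closed. The heart of the proof:
   between noncrossing bonds S ⊊ T there is a noncrossing bond U with S ⊊ U ⊆ T obtained
   from S by merging just two components. Hence consecutive members of a maximal chain
   differ in rank by one, and every maximal chain has n + 1 - rank G elements.
   To choose the two components, start from an edge xy of G joining two S-components
   inside one T-component. If a third S-component separates x from y (has a chord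
   crossing xy), it has an edge crossing xy, and since J(e, f) has at most four vertices
   some edge of G joins x or y to that component; the new pair is separated by strictly
   fewer components. A pair separated by no component can be merged without creating a
   crossing. *)

From mathcomp Require Import all_boot all_order zify.
Set Implicit Arguments. Unset Strict Implicit. Unset Printing Implicit Defensive.

Lemma connect_exit_edge (T : finType) (e : rel T) (P : pred T) x y :
  connect e x y -> P x -> ~~ P y ->
  exists u v, [/\ connect e x u, e u v, P u & ~~ P v].
Proof.
move=> /connectP[p pth ->]; elim: p x pth => [|z p IH] x /=; first by move=> _ ->.
case/andP=> exz pz Px Py; case Pz: (P z); last by exists x, z; rewrite connect0 Pz.
have [u [v [zu uv Pu Pv]]] := IH z pz Pz Py.
by exists u, v; split=> //; apply: connect_trans zu; apply: connect1.
Qed.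

Lemma connect_sub_preorder (T : finType) (e r : rel T) :
  reflexive r -> transitive r -> subrel e r -> subrel (connect e) r.
Proof.
move=> rr rt er x _ /connectP[p pth ->]; elim: p x pth => [|z p IH] x //=.
by case/andP=> /er exz /IH; apply: rt.
Qed.

Definition glue (T : eqType) (cx cy r : T) : T := if r == cy then cx else r.

Lemma glue_eq (T : eqType) (cx cy r r' : T) :
  (glue cx cy r == glue cx cy r') =
  (r == r') || (r \in [:: cx; cy]) && (r' \in [:: cx; cy]).
Proof.
rewrite /glue !inE.
have [->|ry] := eqVneq r cy; have [->|r'y] := eqVneq r' cy; rewrite ?eqxx ?orbT //=.
- by rewrite orbF eq_sym.
- by rewrite (negbTE ry) andbT orbF.
- by rewrite !orbF; case: (eqVneq r cx) => [->|]; rewrite ?andbF ?orbF // (eq_sym r') orbb.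
Qed.

Definition between (u v t : nat) : bool := (u < t < v) || (v < t < u).

Definition chords_cross (u v s t : nat) : bool :=
  [&& s != u, s != v, t != u, t != v & between u v s != between u v t].

Lemma chords_crossC u v s t : chords_cross u v s t = chords_cross s t u v.
Proof. by rewrite /chords_cross /between; apply/idP/idP; lia. Qed.

Lemma chords_cross_swapl u v s t : chords_cross u v s t = chords_cross v u s t.
Proof. by rewrite /chords_cross /between; apply/idP/idP; lia. Qed.

Lemma chords_cross_swapr u v s t : chords_cross u v s t = chords_cross u v t s.
Proof. by rewrite /chords_cross /between; apply/idP/idP; lia. Qed.

Lemma chords_cross_uniq u v s t : chords_cross u v s t -> uniq [:: u; v; s; t].
Proof. by rewrite /chords_cross /between /= !inE; lia. Qed.

Lemma chords_cross_sorted a b c d : a < b -> b < c -> c < d -> chords_cross a c b d.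
Proof. by rewrite /chords_cross /between; lia. Qed.

Lemma chords_cross_sorted_inv a c b d :
  a < c -> b < d -> a < b -> chords_cross a c b d -> [/\ a < b, b < c & c < d].
Proof. by rewrite /chords_cross /between => *; split; lia. Qed.

Lemma far_side_between m1 m2 l2 l3 a b :
  chords_cross m1 m2 a l2 -> between m1 m2 l2 = between m1 m2 l3 ->
  l3 != m1 -> l3 != m2 -> between m1 m2 a = between m1 m2 b ->
  between l2 l3 a = between l2 l3 b.
Proof. by rewrite /chords_cross /between; lia. Qed.

Lemma far_side_between_endpoint m1 m2 l2 l3 a :
  chords_cross m1 m2 a l2 -> between m1 m2 l2 = between m1 m2 l3 ->
  l3 != m1 -> l3 != m2 -> between l2 l3 a = between l2 l3 m1.
Proof. by rewrite /chords_cross /between; lia. Qed.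

Section Components.

Variable n : nat.
Implicit Types (G S T : edgeset n) (e : 'I_n * 'I_n) (u v w x y : 'I_n).

Lemma adj_sym S : symmetric (adj S).
Proof. by move=> u v; rewrite /adj orbC. Qed.

Definition comp_of S u : 'I_n := root (adj S) u.

Lemma connect_adjE S u v : connect (adj S) u v = (comp_of S u == comp_of S v).
Proof. by rewrite /comp_of root_connect //; apply/sym_connect_sym/adj_sym. Qed.

Lemma same_compE S u v : same_comp S u v = (comp_of S u == comp_of S v).
Proof. exact: connect_adjE. Qed.

Lemma comp_adj S u v : adj S u v -> comp_of S u = comp_of S v.
Proof. by move=> uv; apply/eqP; rewrite -connect_adjE; apply: connect1. Qed.

Lemma comp_edge S e : e \in S -> comp_of S e.1 = comp_of S e.2.
Proof. by move=> eS; apply: comp_adj; rewrite /adj -surjective_pairing eS. Qed.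

Lemma neq_of_comp S u v : comp_of S u != comp_of S v -> (u != v :> nat).
Proof. by rewrite val_eqE; apply: contraNneq => ->. Qed.

Definition refines S T := forall u v, comp_of S u = comp_of S v -> comp_of T u = comp_of T v.

Lemma adj_subset S T u v : S \subset T -> adj S u v -> adj T u v.
Proof. by move=> /subsetP ST /orP[] /ST h; rewrite /adj h ?orbT. Qed.

Lemma refines_subset S T : S \subset T -> refines S T.
Proof.
move=> ST u v /eqP; rewrite -connect_adjE => uv; apply/eqP; rewrite -connect_adjE.
by apply: connect_sub uv => a b /(adj_subset ST)/connect1.
Qed.

Lemma bond_subset G S : bond G S -> S \subset G.
Proof. by case/andP. Qed.

Lemma bond_edge G S e : bond G S -> e \in G -> comp_of S e.1 = comp_of S e.2 -> e \in S.
Proof. by case/andP=> _ /forall_inP bS eG /eqP; rewrite -same_compE; apply/implyP/bS. Qed.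

Lemma proper_bond_edge G S T : bond G S -> T \subset G -> S \proper T ->
  exists2 e, e \in T & comp_of S e.1 != comp_of S e.2.
Proof.
move=> bS /subsetP TG /properP[_ [e eT eS]]; exists e => //.
by apply: contra eS => /eqP; apply: bond_edge bS (TG e eT).
Qed.

Definition comp_mins S : {set 'I_n} :=
  [set u | [forall v, (comp_of S u == comp_of S v) ==> (u <= v)]].

Definition ncomp S : nat := #|comp_mins S|.

Lemma comp_minsP S u :
  reflect (forall v, comp_of S u = comp_of S v -> u <= v) (u \in comp_mins S).
Proof.
rewrite inE; apply: (iffP forallP) => h v; first by move/eqP; apply/implyP/h.
by apply/implyP => /eqP /h.
Qed.

Lemma exists_comp_min S u : exists2 m, comp_of S m = comp_of S u & m \in comp_mins S.
Proof.
have [m um m_min] :=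
  arg_minnP (P := fun v => comp_of S v == comp_of S u) (fun v : 'I_n => nat_of_ord v) (eqxx _).
by exists m; [apply/eqP | apply/comp_minsP => v mv; apply: m_min; rewrite -mv].
Qed.

Lemma comp_min_uniq S m m' :
  m \in comp_mins S -> m' \in comp_mins S -> comp_of S m = comp_of S m' -> m = m'.
Proof.
move=> /comp_minsP m_min /comp_minsP m'_min mm'; apply: val_inj; apply/eqP.
by rewrite eqn_leq m_min //= m'_min.
Qed.

Lemma refines_comp_mins S T : refines S T -> comp_mins T \subset comp_mins S.
Proof. by move=> ST; apply/subsetP => u /comp_minsP m_min; apply/comp_minsP => v /ST /m_min. Qed.

Lemma ncomp_refines S T : refines S T -> ncomp T <= ncomp S.
Proof. by move=> ST; apply/subset_leq_card/refines_comp_mins. Qed.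

Lemma ncomp_refines_strict S T x y : refines S T ->
  comp_of T x = comp_of T y -> comp_of S x != comp_of S y -> ncomp T < ncomp S.
Proof.
move=> ST Txy; apply: contraNT; rewrite -leqNgt => le_ncomp.
have /eqP eq_mins : comp_mins T == comp_mins S by rewrite eqEcard refines_comp_mins.
have [mx xmx mx_min] := exists_comp_min S x; have [my ymy my_min] := exists_comp_min S y.
rewrite -xmx -ymy (@comp_min_uniq T mx my) ?eq_mins //.
by rewrite (ST _ _ xmx) (ST _ _ ymy).
Qed.

Lemma ncomp_proper_bond G S T : bond G S -> bond G T -> S \proper T -> ncomp T < ncomp S.
Proof.
move=> bS bT ST; have [e eT eS] := proper_bond_edge bS (bond_subset bT) ST.
exact: ncomp_refines_strict (refines_subset (proper_sub ST)) (comp_edge eT) eS.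
Qed.

(* Only the larger of the minima of the two glued components stops being a minimum. *)
Lemma ncomp_merge_leq S T x y :
  (forall u v, comp_of T u = comp_of T v -> comp_of S u = comp_of S v \/
     comp_of S u \in [:: comp_of S x; comp_of S y] /\
     comp_of S v \in [:: comp_of S x; comp_of S y]) ->
  ncomp S <= (ncomp T).+1.
Proof.
move=> TS.
have [mx xmx mx_min] := exists_comp_min S x; have [my ymy my_min] := exists_comp_min S y.
pose m0 := if mx <= my then my else mx.
suff sub : comp_mins S :\ m0 \subset comp_mins T.
  by rewrite /ncomp (cardsD1 m0) -add1n leq_add ?leq_b1 ?subset_leq_card.
apply/subsetP => u /setD1P[um0 u_min]; apply/comp_minsP => v /TS [|[Mu Mv]].
  exact: comp_minsP u_min v.
have : (u == mx) || (u == my).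
  move: Mu; rewrite !inE -xmx -ymy => /orP[]/eqP uM.
  - by rewrite (comp_min_uniq u_min mx_min uM) eqxx.
  - by rewrite (comp_min_uniq u_min my_min uM) eqxx orbT.
move: Mv; rewrite !inE -xmx -ymy => /orP[]/eqP/esym vM.
- have /comp_minsP/(_ v vM) := mx_min.
  by move: um0; rewrite /m0 -!val_eqE; case: (leqP mx my) => h /=; lia.
- have /comp_minsP/(_ v vM) := my_min.
  by move: um0; rewrite /m0 -!val_eqE; case: (leqP mx my) => h /=; lia.
Qed.

End Components.

Section Noncrossing.

Variable n : nat.
Implicit Types (G S : edgeset n) (a b c d p q t u v w x y z : 'I_n).

Lemma noncrossing_bondP G S :
  reflect (bond G S /\ forall a b c d, a < b -> b < c -> c < d ->
             comp_of S a = comp_of S c -> comp_of S b = comp_of S d -> comp_of S a = comp_of S b)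
          (noncrossing_bond G S).
Proof.
apply: (iffP andP) => -[bS ncS]; split=> //.
  move=> a b c d ab bc cd /eqP ac /eqP bd; apply/eqP; rewrite -same_compE.
  move: ncS => /forallP/(_ a)/forallP/(_ b)/forallP/(_ c)/forallP/(_ d).
  by rewrite ab bc cd !same_compE ac bd /= negbK.
apply/forallP => a; apply/forallP => b; apply/forallP => c; apply/forallP => d.
apply/implyP => /andP[/andP[ab bc] cd]; rewrite !same_compE.
by apply/negP => /and3P[/eqP ac /eqP bd]; rewrite (ncS a b c d) ?eqxx.
Qed.

Lemma noncrossing_bond_subset G S : noncrossing_bond G S -> S \subset G.
Proof. by case/andP=> /bond_subset. Qed.

Definition separates S z x y : bool :=
  [&& comp_of S z != comp_of S x, comp_of S z != comp_of S y &
      [exists z1, exists z2,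
         [&& comp_of S z1 == comp_of S z, comp_of S z2 == comp_of S z & chords_cross z1 z2 x y]]].

Definition separators S x y : {set 'I_n} := [set z | separates S z x y].

Lemma separatorsC S x y : separators S x y = separators S y x.
Proof.
apply/setP => z; rewrite !inE /separates andbCA; congr [&& _, _ & _].
by apply: eq_existsb => z1; apply: eq_existsb => z2; rewrite chords_cross_swapr.
Qed.

Lemma separator_crossing_edge S x y z : z \in separators S x y ->
  exists u v, [/\ adj S u v, comp_of S u = comp_of S z, comp_of S v = comp_of S z
                 & chords_cross x y u v].
Proof.
rewrite inE => /and3P[nzx nzy /existsP[z1 /existsP[z2 /and3P[/eqP z1z /eqP z2z cr]]]].
have [a [b [az bz Pa Pb]]] : exists a b,
    [/\ comp_of S a = comp_of S z, comp_of S b = comp_of S z, between x y a & ~~ between x y b].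
  move: cr; rewrite chords_crossC => /and5P[_ _ _ _].
  case: (boolP (between x y z1)) => h1 h2.
  - by exists z1, z2; split=> //; move: h2; case: between.
  - by exists z2, z1; split=> //; move: h2; case: between.
have ab : connect (adj S) a b by rewrite connect_adjE az bz.
have [u [v [au uv Pu Pv]]] :=
  connect_exit_edge (P := fun t : 'I_n => between x y t) ab Pa Pb.
have uz : comp_of S u = comp_of S z by move: au; rewrite connect_adjE az => /eqP.
have vz : comp_of S v = comp_of S z by rewrite -(comp_adj uv).
exists u, v; split=> //.
rewrite /chords_cross Pu (negbTE Pv) andbT.
by apply/and4P; split; apply: (neq_of_comp (S := S)); rewrite ?uz ?vz.
Qed.

Section OneBond.

Variables (G S : edgeset n).
Hypothesis ncS : noncrossing_bond G S.

Lemma comp_crossing a b c d :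
  chords_cross a c b d -> comp_of S a = comp_of S c -> comp_of S b = comp_of S d ->
  comp_of S a = comp_of S b.
Proof.
have /noncrossing_bondP[_ nc4] := ncS.
wlog ac : a c / a < c.
  move=> wl cr ac' bd; have [lt|gt|eq] := ltngtP a c; first exact: wl lt cr ac' bd.
    by rewrite ac' (wl c a gt _ _ bd) // -chords_cross_swapl.
  by exfalso; move: cr; rewrite /chords_cross /between; lia.
wlog bd : b d / b < d.
  move=> wl cr ac' bd'; have [lt|gt|eq] := ltngtP b d; first exact: wl lt cr ac' bd'.
    by rewrite bd' (wl d b gt _ ac') // -chords_cross_swapr.
  by exfalso; move: cr; rewrite /chords_cross /between; lia.
wlog ab : a b c d ac bd / a < b.
  move=> wl cr ac' bd'; have [lt|gt|eq] := ltngtP a b; first exact: wl ac bd lt cr ac' bd'.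
    by rewrite (wl b a d c bd ac gt _ bd' ac') // -chords_crossC.
  by exfalso; move: cr; rewrite /chords_cross /between; lia.
by move=> cr; have [] := chords_cross_sorted_inv ac bd ab cr; apply: nc4.
Qed.

Lemma comp_same_side t t' z1 z2 :
  comp_of S t = comp_of S t' -> comp_of S z1 = comp_of S z2 -> comp_of S t != comp_of S z1 ->
  between z1 z2 t = between z1 z2 t'.
Proof.
move=> tt' z12 tz1; apply/eqP/negPn/negP => side.
have cr : chords_cross z1 z2 t t'.
  rewrite /chords_cross side andbT.
  by apply/and4P; split; apply: (neq_of_comp (S := S)); rewrite -?tt' -?z12.
by move: tz1; rewrite (comp_crossing cr z12 tt') eqxx.
Qed.

Lemma separators_proper x y z q : z \in separators S x y -> comp_of S q = comp_of S z ->
  separators S x q \proper separators S x y.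
Proof.
move=> zxy qz; move: (zxy).
rewrite inE => /and3P[nzx nzy /existsP[z1 /existsP[z2 /and3P[/eqP z1z /eqP z2z crz]]]].
rewrite properE; apply/andP; split; last first.
  by apply/subsetPn; exists z; rewrite // inE /separates qz eqxx andbF.
apply/subsetP => w; rewrite !inE.
case/and3P=> nwx nwq /existsP[w1 /existsP[w2 /and3P[/eqP w1w /eqP w2w crw]]].
have nzw1 : comp_of S z != comp_of S w1 by rewrite w1w -qz eq_sym.
have z_side : between w1 w2 z1 = between w1 w2 z2.
  by apply: comp_same_side; rewrite ?z1z ?z2z // w1w w2w.
(* [x] and the component of [z] lie on opposite sides of chord [w1 w2], so [x] lies on
   the side of chord [z1 z2] containing [w1], away from [y]. *)
have {}crw : chords_cross w1 w2 x z1.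
  have q_side : between w1 w2 q = between w1 w2 z1.
    by apply: comp_same_side; rewrite ?qz ?z1z // ?w2w -?w1w // -qz eq_sym.
  move: crw; rewrite /chords_cross q_side => /and5P[-> -> _ _ ->]; rewrite andbT /=.
  by apply/andP; split; apply: (neq_of_comp (S := S)); rewrite z1z // w2w -w1w.
have [z2w1 z2w2] : (z2 != w1 :> nat) /\ (z2 != w2 :> nat).
  by split; apply: (neq_of_comp (S := S)); rewrite z2z // w2w -w1w.
have x_side : between z1 z2 x = between z1 z2 w1 := far_side_between_endpoint crw z_side z2w1 z2w2.
have xy_side : between z1 z2 x != between z1 z2 y by case/and5P: crz.
have nwy : comp_of S w != comp_of S y.
  apply: contraNneq xy_side => wy; apply/eqP; rewrite x_side.
  by apply: comp_same_side; [rewrite w1w wy | rewrite z1z z2z | rewrite z1z eq_sym].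
rewrite /separates nwx nwy; apply/existsP; exists w1; apply/existsP; exists w2.
rewrite w1w w2w eqxx /=.
move: (crw); rewrite /chords_cross => /and5P[-> -> _ _ _] /=.
apply/and3P; split; try by apply: (neq_of_comp (S := S)); rewrite eq_sym ?w1w ?w2w.
apply: contra xy_side => /eqP xy; apply/eqP; exact: far_side_between crw z_side z2w1 z2w2 xy.
Qed.

Lemma separator_of_crossing x y z1 z2 p q :
  chords_cross z1 z2 p q -> comp_of S z1 = comp_of S z2 ->
  comp_of S z1 \notin [:: comp_of S x; comp_of S y] ->
  comp_of S p \in [:: comp_of S x; comp_of S y] ->
  comp_of S q \in [:: comp_of S x; comp_of S y] ->
  comp_of S p != comp_of S q -> z1 \in separators S x y.
Proof.
move=> cr z12 z1M pM qM pq.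
wlog [px qy] : p q cr pM qM pq / comp_of S p = comp_of S x /\ comp_of S q = comp_of S y.
  move=> wl; have := pM; have := qM; rewrite !inE in pM qM.
  case/orP: pM => /eqP pM'; case/orP: qM => /eqP qM' qM pM.
  - by move: pq; rewrite pM' qM' eqxx.
  - exact: wl p q cr pM qM pq (conj pM' qM').
  - rewrite chords_cross_swapr eq_sym in cr pq.
    exact: wl q p cr qM pM pq (conj qM' pM').
  - by move: pq; rewrite pM' qM' eqxx.
move: z1M; rewrite !inE negb_or => /andP[z1x z1y].
have x_side : between z1 z2 x = between z1 z2 p.
  by apply: comp_same_side; rewrite // eq_sym.
have y_side : between z1 z2 y = between z1 z2 q.
  by apply: comp_same_side; rewrite // eq_sym.
rewrite /separates z1x z1y /=.
apply/existsP; exists z1; apply/existsP; exists z2; rewrite -z12 eqxx /=.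
rewrite /chords_cross x_side y_side; move: cr => /and5P[_ _ _ _ ->]; rewrite andbT.
by apply/and4P; split; apply: (neq_of_comp (S := S)); rewrite -?z12 // eq_sym.
Qed.

End OneBond.

End Noncrossing.

Lemma cross_of_chords_cross n (e f : 'I_n * 'I_n) :
  e.1 < e.2 -> f.1 < f.2 -> chords_cross e.1 e.2 f.1 f.2 -> cross e f.
Proof. by case: e f => [a b] [c d]; rewrite /cross /chords_cross /between /=; lia. Qed.

(* Four distinct vertices exhaust [W], so a path inside [W] from [e] to [f] leaves the
   endpoints of [e] by an edge into an endpoint of [f]. *)
Lemma induced_connected_card4_adjacent n (G : edgeset n) (W : {set 'I_n}) (e f : 'I_n * 'I_n) :
  induced_connected G W -> #|W| <= 4 -> chords_cross e.1 e.2 f.1 f.2 ->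
  e.1 \in W -> e.2 \in W -> f.1 \in W -> f.2 \in W ->
  exists p q, [/\ p \in [:: e.1; e.2], q \in [:: f.1; f.2] & adj G p q].
Proof.
move=> W_conn W_le4 cr e1W e2W f1W f2W.
have uniq_ef : uniq [:: e.1; e.2; f.1; f.2].
  by rewrite -(map_inj_uniq val_inj); apply: chords_cross_uniq.
have ef_W : {subset [:: e.1; e.2; f.1; f.2] <= enum W}.
  by move=> w; rewrite mem_enum !inE => /or4P[] /eqP->.
have [_ W_ef] := uniq_min_size uniq_ef ef_W (leq_trans (eq_leq (esym (cardE W))) W_le4).
have f1_e : f.1 \notin [:: e.1; e.2].
  by case/and5P: cr => f1e1 f1e2 _ _ _; rewrite !inE negb_or; apply/andP.
have := forall_inP W_conn _ e1W => /forall_inP /(_ _ f1W) path.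
have [p [q [_ /and3P[_ qW pq] pe qe]]] :=
  connect_exit_edge (P := mem [:: e.1; e.2]) path (mem_head _ _) f1_e.
exists p, q; split=> //.
by move: qW qe; rewrite -mem_enum -W_ef !inE; case/or4P=> ->; rewrite ?orTb ?orbT.
Qed.

Section TightlyClosed.

Variables (n : nat) (G : edgeset n).
Hypotheses (graphG : is_graph G) (tightG : tightly_closed G).
Implicit Types (a b c d p q s t u v w : 'I_n).

Lemma adj_edge u v : adj G u v -> exists2 e, e \in G & e = (u, v) \/ e = (v, u).
Proof. by case/orP => h; [exists (u, v); [|left] | exists (v, u); [|right]]. Qed.

Lemma crossing_graph_edges_adjacent e f : e \in G -> f \in G ->
  chords_cross e.1 e.2 f.1 f.2 ->
  exists p q, [/\ p \in [:: e.1; e.2], q \in [:: f.1; f.2] & adj G p q].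
Proof.
move=> eG fG cr.
have ef : cross e f by apply: cross_of_chords_cross cr; apply: graphG.
have [crossG J4] := tightG; have [W [W_min _]] := crossG e f eG fG ef.
have /and5P[W_conn e1W e2W f1W f2W] := minsetp W_min.
exact: induced_connected_card4_adjacent W_conn (J4 e f eG fG ef W W_min) cr e1W e2W f1W f2W.
Qed.

Lemma crossing_edges_adjacent u v s t :
  adj G u v -> adj G s t -> chords_cross u v s t ->
  exists p q, [/\ p \in [:: u; v], q \in [:: s; t] & adj G p q].
Proof.
move=> /adj_edge[e eG euv] /adj_edge[f fG fst] cr.
have [|p [q [pe qf pq]]] := crossing_graph_edges_adjacent eG fG.
  case: euv fst => -> [] -> /=; first exact: cr.
  - by rewrite -chords_cross_swapr.
  - by rewrite -chords_cross_swapl.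
  - by rewrite -chords_cross_swapl -chords_cross_swapr.
exists p, q; split=> //.
- by case: euv pe => -> //; rewrite !inE orbC.
- by case: fst qf => -> //; rewrite !inE orbC.
Qed.

Lemma crossing_edges_same_comp u v s t :
  adj G u v -> adj G s t -> chords_cross u v s t -> comp_of G u = comp_of G s.
Proof.
move=> uv st cr; have [p [q [pu qs pq]]] := crossing_edges_adjacent uv st cr.
have up : comp_of G u = comp_of G p.
  by move: pu; rewrite !inE => /orP[]/eqP-> //; apply: comp_adj.
have qs_comp : comp_of G q = comp_of G s.
  by move: qs; rewrite !inE => /orP[]/eqP-> //; apply: comp_adj; rewrite adj_sym.
by rewrite up (comp_adj pq).
Qed.

(* A component reaching strictly inside an edge [u v] without containing [u] stays
   inside: leaving would need an edge crossing [u v]. *)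
Lemma comp_inside_edge u v w0 w : adj G u v -> u < w0 < v ->
  comp_of G w0 != comp_of G u -> comp_of G w0 = comp_of G w -> u < w < v.
Proof.
move=> uv w0_in w0u /eqP; rewrite -connect_adjE => w0w.
apply/negPn/negP => w_out.
have [s [t [w0s st s_in t_out]]] :=
  connect_exit_edge (P := fun x : 'I_n => u < x < v) w0w w0_in w_out.
have s_w0 : comp_of G s = comp_of G w0 by move: w0s; rewrite connect_adjE => /eqP.
have t_w0 : comp_of G t = comp_of G w0 by rewrite -(comp_adj st).
have tu : t != u :> nat by apply: (neq_of_comp (S := G)); rewrite t_w0.
have tv : t != v :> nat by apply: (neq_of_comp (S := G)); rewrite t_w0 -(comp_adj uv).
have cr : chords_cross u v s t.
  by move: w0_in s_in t_out tu tv; rewrite /chords_cross /between; lia.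
by move: w0u; rewrite -s_w0 -(crossing_edges_same_comp uv st cr) eqxx.
Qed.

Lemma exists_edge_over a b c : comp_of G a = comp_of G c -> a < b -> b < c ->
  comp_of G a != comp_of G b ->
  exists u v, [/\ comp_of G u = comp_of G a, adj G u v & u < b < v].
Proof.
move=> /eqP; rewrite -connect_adjE => ac ab bc nab.
have cb : ~~ (c < b) by rewrite -leqNgt ltnW.
have [u [v [au uv ub vb]]] := connect_exit_edge (P := fun x : 'I_n => x < b) ac ab cb.
have ua : comp_of G u = comp_of G a by move: au; rewrite connect_adjE eq_sym => /eqP.
exists u, v; split=> //; rewrite ub -leqNgt in vb *; rewrite ltn_neqAle vb andbT.
by apply: (neq_of_comp (S := G)); rewrite -(comp_adj uv) ua eq_sym.
Qed.

(* Edges [u v] and [s t] over [b] and [c] would have to nest both ways round. *)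
Lemma graph_noncrossing : noncrossing_bond G G.
Proof.
apply/noncrossing_bondP; split.
  by apply/andP; split; [exact: subxx | apply/forall_inP => e eG; rewrite eG implybT].
move=> a b c d ab bc cd ac bd; apply/eqP/negPn/negP => nab.
have nbc : comp_of G b != comp_of G c by rewrite -ac eq_sym.
have [u [v [ua uv ubv]]] := exists_edge_over ac ab bc nab.
have [s [t [sb st sct]]] := exists_edge_over bd bc cd nbc.
have /andP[us _] : u < s < v.
  by apply: comp_inside_edge uv ubv _ _; rewrite ?ua ?sb // eq_sym.
have /andP[su _] : s < u < t.
  by apply: comp_inside_edge st sct _ _; rewrite ?sb ?ua -?ac // eq_sym.
by move: (ltn_trans us su); rewrite ltnn.
Qed.

End TightlyClosed.

Section Merge.

Variables (n : nat) (G S : edgeset n) (x y : 'I_n).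
Hypotheses (SG : S \subset G) (xy : adj G x y).
Implicit Types (a b c d p q u v z : 'I_n) (e : 'I_n * 'I_n).

Local Notation glued := [:: comp_of S x; comp_of S y].

Definition merge_bond : edgeset n :=
  [set e in G | glue (comp_of S x) (comp_of S y) (comp_of S e.1) ==
                glue (comp_of S x) (comp_of S y) (comp_of S e.2)].

Lemma subset_merge_bond : S \subset merge_bond.
Proof.
apply/subsetP => e eS; rewrite inE (subsetP SG _ eS) /=.
by rewrite (comp_edge eS).
Qed.

Lemma merge_bond_compE u v :
  (comp_of merge_bond u == comp_of merge_bond v) =
  (comp_of S u == comp_of S v) || (comp_of S u \in glued) && (comp_of S v \in glued).
Proof.
rewrite -glue_eq; apply/idP/idP.
  rewrite -connect_adjE.
  pose r := [rel u v | glue (comp_of S x) (comp_of S y) (comp_of S u) ==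
                        glue (comp_of S x) (comp_of S y) (comp_of S v)].
  apply: (@connect_sub_preorder _ _ r) => [w|w2 w1 w3 /= /eqP-> //|w1 w2 /orP[]] /=.
  - exact: eqxx.
  - by rewrite inE => /andP[].
  - by rewrite inE => /andP[_]; rewrite eq_sym.
have x_y : comp_of merge_bond x = comp_of merge_bond y.
  apply: comp_adj; case/orP: xy => h; rewrite /adj !inE h /= !glue_eq !inE !eqxx ?orbT //.
have to_x w : comp_of S w \in glued -> comp_of merge_bond w = comp_of merge_bond x.
  rewrite !inE => /orP[]/eqP wM; last rewrite x_y; exact: (refines_subset subset_merge_bond wM).
rewrite glue_eq => /orP[/eqP|/andP[/to_x-> /to_x->]] //.
by move=> uv; apply/eqP; exact: (refines_subset subset_merge_bond uv).
Qed.

Lemma merge_bond_bond : bond G merge_bond.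
Proof.
apply/andP; split; first by apply/subsetP => e; rewrite inE => /andP[].
apply/forall_inP => e eG; apply/implyP.
by rewrite same_compE merge_bond_compE -glue_eq inE eG.
Qed.

Lemma ncomp_merge_bond : ncomp S <= (ncomp merge_bond).+1.
Proof.
apply: (ncomp_merge_leq (x := x) (y := y)) => u v /eqP.
by rewrite merge_bond_compE => /orP[/eqP|/andP[]]; [left | right].
Qed.

Lemma merge_bond_subset T : bond G T -> refines S T -> comp_of T x = comp_of T y ->
  merge_bond \subset T.
Proof.
move=> bT ST Txy; apply/subsetP => e; rewrite inE => /andP[eG]; rewrite glue_eq => he.
apply: bond_edge bT eG _; case/orP: he => [/eqP/ST //|/andP[]].
by rewrite !inE => /orP[]/eqP/ST-> /orP[]/eqP/ST->.
Qed.

Lemma merge_bond_noncrossing : noncrossing_bond G S -> separators S x y = set0 ->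
  noncrossing_bond G merge_bond.
Proof.
move=> ncS sep0; apply/noncrossing_bondP; split; first exact: merge_bond_bond.
have /noncrossing_bondP[_ ncS4] := ncS.
have no_sep z1 z2 p q : chords_cross z1 z2 p q -> comp_of S z1 = comp_of S z2 ->
    comp_of S z1 \notin glued -> comp_of S p \in glued -> comp_of S q \in glued ->
    comp_of S p != comp_of S q -> False.
  by move=> cr z12 z1M pM qM pq; move: (separator_of_crossing ncS cr z12 z1M pM qM pq);
    rewrite sep0 inE.
move=> a b c d ab bc cd /eqP ac /eqP bd; apply/eqP; move: ac bd; rewrite !merge_bond_compE.
have cr_ac := chords_cross_sorted ab bc cd.
have cr_bd : chords_cross b d a c by rewrite -chords_crossC.
case/orP=> [/eqP ac|/andP[aM cM]]; case/orP=> [/eqP bd|/andP[bM dM]]; apply/orP.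
- by left; rewrite (ncS4 a b c d) ?eqxx.
- case: (boolP (comp_of S a \in glued)) => [aM|aM]; first by right; apply/andP.
  have [bd|nbd] := eqVneq (comp_of S b) (comp_of S d).
    by left; rewrite (ncS4 a b c d) ?eqxx.
  by case: (no_sep _ _ _ _ cr_ac ac aM bM dM nbd).
- case: (boolP (comp_of S b \in glued)) => [bM|bM]; first by right; apply/andP.
  have [ac|nac] := eqVneq (comp_of S a) (comp_of S c).
    by left; rewrite (ncS4 a b c d) ?eqxx.
  by case: (no_sep _ _ _ _ cr_bd bd bM aM cM nac).
- by right; apply/andP.
Qed.

End Merge.

Section Cover.

Variables (n : nat) (G S T : edgeset n).
Hypotheses (graphG : is_graph G) (tightG : tightly_closed G).
Hypotheses (ncS : noncrossing_bond G S) (ncT : noncrossing_bond G T) (ST : S \subset T).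
Implicit Types (p q u v x y z : 'I_n).

Definition bridge x y : bool :=
  [&& adj G x y, comp_of T x == comp_of T y & comp_of S x != comp_of S y].

Lemma bridge_separators_proper x y z : bridge x y -> z \in separators S x y ->
  exists p q, bridge p q /\ separators S p q \proper separators S x y.
Proof.
move=> /and3P[xy /eqP Txy Sxy] zxy.
have [u [v [uv uz vz cr]]] := separator_crossing_edge zxy.
have uvG := adj_subset (noncrossing_bond_subset ncS) uv.
have [p [q [pxy quv pq]]] := crossing_edges_adjacent graphG tightG xy uvG cr.
have qz : comp_of S q = comp_of S z by move: quv; rewrite !inE => /orP[]/eqP->.
have Txu := comp_crossing ncT cr Txy (refines_subset ST (comp_adj uv)).
have Tq : comp_of T q = comp_of T u.
  by move: quv; rewrite !inE => /orP[]/eqP-> //; rewrite (refines_subset ST (comp_adj uv)).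
move: zxy (zxy); rewrite {1}inE => /and3P[zx zy _] zxy.
exists p, q; move: pxy pq; rewrite !inE => /orP[]/eqP-> pq.
- split; last exact: (separators_proper ncS zxy qz).
  by rewrite /bridge pq Txu Tq eqxx qz eq_sym zx.
- have zyx : z \in separators S y x by rewrite -separatorsC.
  split; last by rewrite (separatorsC S x y); exact: (separators_proper ncS zyx qz).
  by rewrite /bridge pq -Txy Txu Tq eqxx qz eq_sym zy.
Qed.

Lemma exists_bridge_without_separator x y : bridge x y ->
  exists p q, bridge p q /\ separators S p q = set0.
Proof.
move=> bxy.
have [[p q] /= bpq pq_min] :=
  arg_minnP (P := fun r : 'I_n * 'I_n => bridge r.1 r.2)
            (fun r => #|separators S r.1 r.2|) (bxy : bridge (x, y).1 (x, y).2).
exists p, q; split=> //; apply/eqP; rewrite -subset0; apply/subsetP => z zpq.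
have [p' [q' [bpq' lt_sep]]] := bridge_separators_proper bpq zpq.
by move: (pq_min (p', q') bpq'); rewrite leqNgt (proper_card lt_sep).
Qed.

Lemma noncrossing_bond_cover : S \proper T ->
  exists U, [/\ noncrossing_bond G U, S \proper U, U \subset T & ncomp S = (ncomp U).+1].
Proof.
move=> ST'; have SG := noncrossing_bond_subset ncS.
have /andP[bS _] := ncS; have /andP[bT _] := ncT.
have [e eT eS] := proper_bond_edge bS (bond_subset bT) ST'.
have be : bridge e.1 e.2.
  rewrite /bridge eS (comp_edge eT) eqxx /adj -surjective_pairing.
  by rewrite (subsetP (bond_subset bT) _ eT).
have [x [y [/and3P[xy /eqP Txy Sxy] sep0]]] := exists_bridge_without_separator be.
have Uxy : comp_of (merge_bond G S x y) x = comp_of (merge_bond G S x y) y.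
  by apply/eqP; rewrite (merge_bond_compE SG xy) !inE !eqxx /= !orbT.
exists (merge_bond G S x y); split.
- exact: (merge_bond_noncrossing SG xy ncS sep0).
- rewrite properE (subset_merge_bond _ _ SG) /=; apply: contra Sxy => US.
  by apply/eqP; exact: (refines_subset US Uxy).
- exact: (merge_bond_subset bT (refines_subset ST) Txy).
- apply/eqP; rewrite eqn_leq (ncomp_merge_bond SG xy) /=.
  exact: ncomp_refines_strict (refines_subset (subset_merge_bond _ _ SG)) Uxy Sxy.
Qed.

End Cover.

Lemma comp_of_set0_inj n (u v : 'I_n) :
  comp_of (set0 : edgeset n) u = comp_of set0 v -> u = v.
Proof.
move/eqP; rewrite -connect_adjE => /connectP[[|w p] //= /andP[]].
by rewrite /adj !inE.
Qed.

Lemma ncomp_set0 n : ncomp (set0 : edgeset n) = n.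
Proof.
rewrite /ncomp -[RHS]card_ord -cardsT; apply: eq_card => u.
by rewrite in_setT; apply/comp_minsP => v /comp_of_set0_inj ->.
Qed.

Lemma empty_noncrossing n (G : edgeset n) : is_graph G -> noncrossing_bond G set0.
Proof.
move=> graphG; apply/noncrossing_bondP; split.
  apply/andP; split; first exact: sub0set.
  apply/forall_inP => e eG; rewrite same_compE; apply/implyP => /eqP/comp_of_set0_inj e12.
  by move: (graphG e eG); rewrite e12 ltnn.
move=> a b c d ab bc _ /comp_of_set0_inj ac.
by move: (ltn_trans ab bc); rewrite ac ltnn.
Qed.

Section MaximalChain.

Variables (n : nat) (G : edgeset n) (C : {set edgeset n}).
Hypotheses (graphG : is_graph G) (tightG : tightly_closed G).
Hypothesis maxC : NC_maximal_chain G C.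
Implicit Types (S T U X Y : edgeset n).

Lemma maximal_chain_noncrossing X : X \in C -> noncrossing_bond G X.
Proof. by case/andP: maxC => /andP[/forall_inP ncC _] _; apply: ncC. Qed.

Lemma maximal_chain_bond X : X \in C -> bond G X.
Proof. by case/maximal_chain_noncrossing/andP. Qed.

Lemma maximal_chain_comparable X Y : X \in C -> Y \in C -> (X \subset Y) || (Y \subset X).
Proof. by case/andP: maxC => /andP[_ /forall_inP cmpC] _ /cmpC /forall_inP; apply. Qed.

Lemma maximal_chain_mem U : noncrossing_bond G U ->
  (forall X, X \in C -> (X \subset U) || (U \subset X)) -> U \in C.
Proof.
move=> ncU cmpU; case/andP: maxC => /andP[/forall_inP ncC /forall_inP cmpC] /forallP maxD.
have chainUC : NC_chain G (U |: C).
  apply/andP; split.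
    by apply/forall_inP => X; rewrite in_setU1 => /predU1P[->|/ncC].
  apply/forall_inP => X; rewrite in_setU1 => /predU1P[->|XC];
    apply/forall_inP => Y; rewrite in_setU1 => /predU1P[->|YC].
  - by rewrite subxx.
  - by rewrite orbC; apply: cmpU.
  - exact: cmpU.
  - exact: (forall_inP (cmpC X XC) Y YC).
by move: (maxD (U |: C)); rewrite chainUC subsetUr => /eqP <-; rewrite setU11.
Qed.

Lemma maximal_chain_subset X Y : X \in C -> Y \in C -> ncomp Y <= ncomp X -> X \subset Y.
Proof.
move=> XC YC; case/orP: (maximal_chain_comparable XC YC) => // YX.
have [<-|neq] := eqVneq Y X; first by rewrite subxx.
rewrite leqNgt => /negP; case.
apply: ncomp_proper_bond (maximal_chain_bond YC) (maximal_chain_bond XC) _.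
by rewrite properEneq neq.
Qed.

Lemma maximal_chain_ncomp_inj : {in C &, injective (@ncomp n)}.
Proof.
by move=> X Y XC YC eqXY; apply/eqP; rewrite eqEsubset !maximal_chain_subset ?eqXY.
Qed.

Lemma graph_in_maximal_chain : G \in C.
Proof.
apply: maximal_chain_mem (graph_noncrossing graphG tightG) _ => X XC.
by rewrite (bond_subset (maximal_chain_bond XC)).
Qed.

Lemma set0_in_maximal_chain : set0 \in C.
Proof. by apply: maximal_chain_mem (empty_noncrossing graphG) _ => X _; rewrite sub0set orbT. Qed.

Lemma maximal_chain_cover S T : S \in C -> T \in C -> S \proper T ->
  (forall X, X \in C -> (X \subset S) || (T \subset X)) -> ncomp S = (ncomp T).+1.
Proof.
move=> SC TC ST gap.
have [U [ncU SU UT ncompSU]] := noncrossing_bond_cover graphG tightG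
  (maximal_chain_noncrossing SC) (maximal_chain_noncrossing TC) (proper_sub ST) ST.
have UC : U \in C.
  apply: maximal_chain_mem ncU _ => X XC; case/orP: (gap X XC) => [XS|TX].
  - by rewrite (subset_trans XS (proper_sub SU)).
  - by rewrite (subset_trans UT TX) orbT.
have TU : T \subset U.
  by case/orP: (gap U UC) => // US; move: SU; rewrite properE US andbF.
have -> : T = U by apply/eqP; rewrite eqEsubset TU UT.
exact: ncompSU.
Qed.

Lemma maximal_chain_ncomp_interval k :
  ncomp G <= k <= n -> exists2 X, X \in C & ncomp X = k.
Proof.
case/andP=> Gk k0.
have [/exists_inP[X XC /eqP]|none] := boolP [exists X in C, ncomp X == k]; first by exists X.
have nk X : X \in C -> ncomp X != k.
  by move=> XC; apply: contra none => Xk; apply/exists_inP; exists X.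
have P0 : (set0 \in C) && (k < ncomp (set0 : edgeset n)).
  by rewrite set0_in_maximal_chain ltn_neqAle eq_sym nk ?set0_in_maximal_chain ?ncomp_set0.
have PG : (G \in C) && (ncomp G < k).
  by rewrite graph_in_maximal_chain ltn_neqAle Gk nk ?graph_in_maximal_chain.
have [S /andP[SC kS] S_min] :=
  arg_minnP (P := fun X => (X \in C) && (k < ncomp X)) (@ncomp n) P0.
have [T /andP[TC Tk] T_max] :=
  arg_maxnP (P := fun X => (X \in C) && (ncomp X < k)) (@ncomp n) PG.
have ST : S \proper T.
  rewrite properEneq maximal_chain_subset ?(ltnW (ltn_trans Tk kS)) // andbT.
  by apply: contraTneq kS => ->; rewrite -leqNgt ltnW.
have gap X : X \in C -> (X \subset S) || (T \subset X).
  move=> XC; case: (ltngtP k (ncomp X)) => [kX|Xk|Xk]; last by case/negP: (nk X XC); rewrite Xk.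
  - by rewrite maximal_chain_subset // S_min ?XC.
  - by rewrite (maximal_chain_subset TC XC) ?orbT //; apply: T_max; rewrite XC.
by move: (maximal_chain_cover SC TC ST gap) Tk kS; lia.
Qed.

Lemma card_maximal_chain : #|C| = n.+1 - ncomp G.
Proof.
have ncomp_range X : X \in C -> ncomp G <= ncomp X <= n.
  move=> XC; apply/andP; split.
    exact/ncomp_refines/refines_subset/bond_subset/(maximal_chain_bond XC).
  by rewrite -[X in _ <= X](ncomp_set0 n); apply/ncomp_refines/refines_subset/sub0set.
have: perm_eq (map (@ncomp n) (enum C)) (index_iota (ncomp G) n.+1).
  apply: uniq_perm; last 1 first.
  - move=> k; rewrite mem_index_iota ltnS; apply/mapP/idP => [[X] |].
      by rewrite mem_enum => XC ->; apply: ncomp_range.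
    by case/maximal_chain_ncomp_interval => X XC <-; exists X; rewrite ?mem_enum.
  - rewrite map_inj_in_uniq ?enum_uniq // => X Y; rewrite !mem_enum.
    exact: maximal_chain_ncomp_inj.
  - exact: iota_uniq.
by move/perm_size; rewrite size_map size_iota -cardE.
Qed.

End MaximalChain.

Theorem theorem5p15 (n : nat) (G : edgeset n) :
  is_graph G -> tightly_closed G -> NC_graded G.
Proof.
move=> graphG tightG C1 C2 maxC1 maxC2.
by rewrite (card_maximal_chain graphG tightG maxC1) (card_maximal_chain graphG tightG maxC2).
Qed.
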